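(* Let $P$ be a priority forest on $[n]_0$ with $m$ edges, and let $C$ be a maximal chain of $[\hat0,P]$ with Jordan–Hölder permutation $\lambda(C)$. Then $F_C(P)$, the ordered forest obtained from $P$ by relabeling each non-root vertex $v$ by $\lambda(C)^{-1}(v)$ and marking the root of the $k$-th component tree by $\circ_k$ (with $\circ_0=\circ$), is the unique ordered forest with priority traversal $\lambda(C)^{-1}$ and priority forest $P$.
   Context: $[n]=\{1,\dots,n\}$, $[n]_0=\{0,\dots,n\}$. A priority forest on $[n]_0$ is a rooted forest with vertex set $[n]_0$ whose component trees $T_0,T_1,\dots$ are increasing (each non-root vertex has a larger label than its parent) and satisfy: for $j<k$ every label of $T_j$ is smaller than every label of $T_k$. $\Pi(n)$ is the poset of priority forests on $[n]_0$ ordered by inclusion of edge sets, with an extra top element; $\hat0$ is the edgeless forest. For priority forests $Q\lessdot Q'$ (one edge added), $\lambda(Q,Q')$ is the larger endpoint of the edge in $E(Q')\setminus E(Q)$. A maximal chain $C:\hat0=P_0\lessdot\cdots\lessdot P_m=P$ has Jordan–Hölder permutation $\lambda(C):[m]\to[n]$, $i\mapsto\lambda(P_{i-1},P_i)$, which is injective; $\lambda(C)^{-1}:[n]\to[m]$ is the partial permutation defined on its image. An ordered $(m,n)$-forest is a rooted forest with $n+1$ nodes and $m$ edges whose component trees $T_0,\dots,T_{n-m}$ are totally ordered, with unlabeled roots marked $\circ,\circ_1,\dots,\circ_{n-m}$, and non-root vertices labeled bijectively by $[m]$. Priority search: initially only the children of $\circ$ are unblocked; at each step visit the unblocked unvisited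 node with the smallest label and unblock its children; when a tree is exhausted, move to the next tree, visit its root and unblock its children. Steps are numbered $1,\dots,n$ (the visit of $\circ$ is not counted). The priority traversal is the partial permutation $[n]\to[m]$ sending step $i$ to the label of the node visited at step $i$, undefined when that node is a root. The priority forest is obtained by relabeling each node by its visiting step, with $\circ$ labeled $0$. *)

From mathcomp Require Import all_boot.
Set Implicit Arguments. Unset Strict Implicit. Unset Printing Implicit Defensive.

(* Priority forests on [n]_0 = {0,...,n}, encoded by a parent function. *)
(* P v = Some p  means that (p, v) is an edge with p the parent of v;  *)
(* P v = None    means that v is a root.                               *)
Definition Forest (n : nat) := {ffun 'I_n.+1 -> option 'I_n.+1}.

Section PriorityForests.
Variable n : nat.
Implicit Types P Q : Forest n.

Definition edges P : {set 'I_n.+1 * 'I_n.+1} := [set e | P e.2 == Some e.1].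

Definition up P (v : 'I_n.+1) : 'I_n.+1 := odflt v (P v).
Definition rootF P (v : 'I_n.+1) : 'I_n.+1 := iter n (up P) v.

Definition priority_forest P : Prop :=
  (forall (v p : 'I_n.+1), P v = Some p -> p < v) /\
  (forall u v : 'I_n.+1, rootF P u < rootF P v -> u < v).

Definition edgeless : Forest n := [ffun _ => None].

Definition covers Q Q' : bool :=
  (edges Q \subset edges Q') && (#|edges Q' :\: edges Q| == 1).

Definition jh_label Q Q' : nat :=
  if [pick e in edges Q' :\: edges Q] is Some e then maxn e.1 e.2 else 0.

Definition max_chain (P : Forest n) (m : nat) (C : nat -> Forest n) : Prop :=
  [/\ C 0 = edgeless, C m = P,
      (forall i, i <= m -> priority_forest (C i)) &
      (forall i, i < m -> covers (C i) (C i.+1))].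

Definition lam (C : nat -> Forest n) (i : nat) : nat := jh_label (C i.-1) (C i).

Definition lamInv (C : nat -> Forest n) (m : nat) (v : nat) : option nat :=
  omap (fun i : 'I_m => i.+1) [pick i : 'I_m | lam C i.+1 == v].

End PriorityForests.

(* Nodes: roots  inl k  (k : 'I_(n-m).+1), marked o_k (o_0 = o), the   *)
(* order of the trees being the order of k; non-root nodes  inr j       *)
(* (j : 'I_m), carrying the label j+1 in [m].                           *)
(* An ordered forest is given by the parent of each non-root node.      *)
Definition onode (n m : nat) := ('I_(n - m).+1 + 'I_m)%type.
Definition OForest (n m : nat) := {ffun 'I_m -> onode n m}.

Section OrderedForests.
Variables n m : nat.
Implicit Types F : OForest n m.

Definition oup F (x : onode n m) : onode n m :=
  match x with inl k => inl k | inr j => F j end.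

(* acyclicity: every non-root node reaches a root *)
Definition ordered_forest F : Prop :=
  forall j : 'I_m, exists k, iter m (oup F) (inr j) = inl k.

Definition ochildren F (x : onode n m) : seq 'I_m :=
  [seq j <- enum 'I_m | F j == x].

Definition minlab (x : 'I_m) (s : seq 'I_m) : 'I_m :=
  foldr (fun a b => if val a < val b then a else b) x s.

(* priority search inside one tree: [frontier] is the list of unblocked
   unvisited nodes; visit the smallest label, unblock its children *)
Fixpoint psearch F (fuel : nat) (frontier : seq 'I_m) : seq 'I_m :=
  match fuel with
  | 0 => [::]
  | fuel'.+1 =>
    match frontier with
    | [::] => [::]
    | x :: s => let y := minlab x s in
                y :: psearch F fuel' (rem y frontier ++ ochildren F (inr y))
    end
  end.

(* full visiting sequence: for each tree in order, its root followed by the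
   priority search of the tree; index 0 is the visit of o (not a step),
   index i (1 <= i <= n) is step i *)
Definition visit_seq F : seq (onode n m) :=
  flatten [seq inl k :: map inr (psearch F m (ochildren F (inl k)))
          | k <- enum 'I_(n - m).+1].

Definition traversal F (i : nat) : option nat :=
  match nth (inl ord0) (visit_seq F) i with
  | inr j => Some j.+1
  | inl _ => None
  end.

Definition step F (x : onode n m) : 'I_n.+1 := inord (index x (visit_seq F)).

Definition oprio F : Forest n :=
  [ffun v : 'I_n.+1 =>
     match nth (inl ord0) (visit_seq F) v with
     | inr j => Some (step F (F j))
     | inl _ => None
     end].

End OrderedForests.

(* F_C(P): relabel each non-root vertex v of P by lambda(C)^{-1}(v), and mark
   the root of the k-th component tree (trees ordered by their labels) by o_k *)
Definition FC (n m : nat) (P : Forest n) (C : nat -> Forest n) : OForest n m :=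
  [ffun j : 'I_m =>
     let p := odflt ord0 (P (inord (lam C j.+1))) in
     if P p is Some _ then inr (insubd j (odflt 0 (lamInv C m p)).-1)
     else inl (inord #|[set r : 'I_n.+1 | (P r == None) && (r < p)]|)].

From mathcomp Require Import all_boot zify.
Set Implicit Arguments. Unset Strict Implicit. Unset Printing Implicit Defensive.

(* The i-th cover of the chain adds the edge from its parent to the vertex v_i := lam C i,
   which was a root before; so lam C is a bijection from [m] onto the non-root vertices of
   P, and F_C(P) is P with every vertex relabelled: v_i by i, the k-th root by o_k.
   The priority condition on the forests of the chain orders it: if the parent of v_j is
   smaller than v_i < v_j, then i < j.  Hence, once the priority search of F_C(P) has
   visited the vertices r, ..., v-1 of the tree rooted at r, its frontier consists of the
   vertices w >= v whose parent lies in [r, v), and the smallest label among them is that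
   of v.  Every tree is thus searched in increasing order of vertices: the visiting
   sequence of F_C(P) is 0, 1, ..., n, its traversal is lam(C)^-1 and its priority forest
   is P.  Conversely, in any ordered forest with traversal lam(C)^-1 the traversal fixes
   the non-root entries of the visiting sequence and the order of the trees fixes the
   others, so the visiting sequence is again 0, ..., n and the priority forest P then
   determines every parent. *)

Section PriorityForestTheory.
Variable n : nat.
Implicit Types (Q : Forest n) (u v w q r : 'I_n.+1).

Lemma up_le Q v : priority_forest Q -> up Q v <= v.
Proof. by move=> hQ; rewrite /up; case E: (Q v) => [q|] //=; apply/ltnW/hQ.1. Qed.

Lemma iter_up_le Q k v : priority_forest Q -> iter k (up Q) v <= v.
Proof. by move=> hQ; elim: k => //= k IH; apply: leq_trans (up_le _ hQ) IH. Qed.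

Lemma rootF_id Q r : Q r = None -> rootF Q r = r.
Proof. by move=> Qr; rewrite /rootF iter_fix // /up Qr. Qed.

Lemma rootF_le_parent Q w q : priority_forest Q -> Q w = Some q -> rootF Q w <= q.
Proof.
move=> hQ Qw; have n_gt0 : 0 < n by have := hQ.1 _ _ Qw; have := ltn_ord w; lia.
have -> : rootF Q w = iter n.-1 (up Q) (up Q w) by rewrite -iterSr prednK.
by rewrite {2}/up Qw; apply: iter_up_le.
Qed.

Lemma priority_forest_root0 Q : priority_forest Q -> Q ord0 = None.
Proof. by move=> hQ; case E: (Q ord0) => [q|] //; have := hQ.1 _ _ E. Qed.

Lemma priority_forest_lt_root Q w q r :
  priority_forest Q -> Q w = Some q -> Q r = None -> q < r -> w < r.
Proof.
move=> hQ Qw Qr qr; apply: hQ.2.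
by rewrite (rootF_id Qr); apply: leq_ltn_trans (rootF_le_parent hQ Qw) qr.
Qed.

Lemma iter_up_ltn Q v i j : priority_forest Q ->
  i < j -> Q (iter j.-1 (up Q) v) != None -> iter j (up Q) v < iter i (up Q) v.
Proof.
move=> hQ ij; rewrite -(prednK (leq_ltn_trans (leq0n i) ij)) iterS /up.
case E: (Q _) => [q|] // _ /=; apply: leq_trans (hQ.1 _ _ E) _.
by rewrite -(subnK (_ : i <= j.-1)) ?iterD ?iter_up_le //; lia.
Qed.

(* The labels strictly decrease along a path towards the root, so the non-root vertices
   on such a path are pairwise distinct. *)
Lemma iter_up_root Q k v : priority_forest Q ->
  #|[set u | Q u != None]| <= k -> Q (iter k (up Q) v) = None.
Proof.
move=> hQ card_le; apply/eqP/negPn/negP => nonroot_k.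
have nonroot i : i <= k -> Q (iter i (up Q) v) != None.
  move=> ik; apply: contra nonroot_k => /eqP Qi.
  by rewrite -(subnK ik) iterD iter_fix // /up Qi.
have inj : injective (fun i : 'I_k.+1 => iter i (up Q) v).
  have nonroot_pred (l : 'I_k.+1) : Q (iter l.-1 (up Q) v) != None.
    by apply: nonroot; rewrite (leq_trans (leq_pred l)) // -ltnS.
  move=> i j e; apply: val_inj; case: (ltngtP i j) => // lt;
    by have := iter_up_ltn hQ lt (nonroot_pred _); rewrite e ltnn.
have sub : [set iter i (up Q) v | i : 'I_k.+1] \subset [set u | Q u != None].
  by apply/subsetP => _ /imsetP[i _ ->]; rewrite inE nonroot // -ltnS.
by have := subset_leq_card sub; rewrite card_imset // card_ord; lia.
Qed.

End PriorityForestTheory.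

Section CountIota.
Variable a : pred nat.
Local Notation below v := (count a (iota 0 v)).

Lemma count_iotaS v : below v.+1 = below v + a v.
Proof. by rewrite -addn1 iotaD count_cat /= addn0. Qed.

Lemma count_iota_sub v d N : v + d <= N -> count a (iota v d) <= below N.
Proof.
by move=> le; rewrite -(subnKC le) !iotaD !count_cat !add0n addnAC leq_addl.
Qed.

Lemma count_iota_mono v w : v <= w -> below v <= below w.
Proof. by move=> vw; rewrite -(subnKC vw) iotaD count_cat leq_addr. Qed.

Lemma count_iota_ltn v w : a v -> v < w -> below v < below w.
Proof.
by move=> av vw; apply: leq_trans (count_iota_mono vw); rewrite count_iotaS av addn1.
Qed.

Lemma count_iota_inj v w : a v -> a w -> below v = below w -> v = w.
Proof.
move=> av aw e; case: (ltngtP v w) => // [vw|wv].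
- by have := count_iota_ltn av vw; rewrite e ltnn.
- by have := count_iota_ltn aw wv; rewrite e ltnn.
Qed.

Lemma map_count_iota_filter N :
  [seq below v | v <- filter a (iota 0 N)] = iota 0 (below N).
Proof.
elim: N => [//|N IH]; rewrite -addn1 !iotaD filter_cat map_cat IH count_cat /= add0n.
by case: (a N); rewrite /= ?addn0 ?cats0 // iotaD.
Qed.

Lemma card_ord_set_count k : #|[set i : 'I_k | a i]| = count a (iota 0 k).
Proof.
rewrite cardE /enum_mem size_filter -val_enum_ord count_map count_filter.
by apply: eq_count => i; rewrite !inE andbT.
Qed.

Lemma iota_next v N : v <= N -> exists d, [/\ v + d <= N,
  (forall u, v <= u < v + d -> ~~ a u) & v + d < N -> a (v + d)].
Proof.
move Hk : (N - v) => k; elim: k v Hk => [|k IH] v Hk vN.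
  by exists 0; rewrite addn0; split=> [|u|]; lia.
case av : (a v).
  by exists 0; rewrite addn0; split=> [//|u|//]; lia.
have [vN' Hk'] : v < N /\ N - v.+1 = k by split; lia.
have [d [dN not_a next]] := IH v.+1 Hk' vN'.
exists d.+1; rewrite addnS -addSn; split=> // u /andP[vu ud].
have [-> | ne] := eqVneq u v; first by rewrite av.
by apply: not_a; lia.
Qed.

End CountIota.

Section MinLab.
Variable m : nat.
Implicit Types (x y : 'I_m) (s : seq 'I_m).

Lemma minlab_mem x s : minlab x s \in x :: s.
Proof.
elim: s => [|a s IH] /=; first exact: mem_head.
case: ifP => _; first by rewrite !inE eqxx orbT.
by move: IH; rewrite !inE => /orP[]->; rewrite ?orbT.
Qed.

Lemma minlab_min x s y : y \in x :: s -> minlab x s <= y.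
Proof.
elim: s => [|a s IH] /=; first by rewrite inE => /eqP ->.
move=> y_in; have /orP[/eqP-> | ys] : (y == a) || (y \in x :: s).
  by move: y_in; rewrite !inE => /or3P[]->; rewrite ?orbT.
- by case: ifP => // /negbT; rewrite -leqNgt.
- by case: ifP => [h|_]; [apply/ltnW/(leq_trans h)/IH | apply: IH].
Qed.

End MinLab.

Definition is_tree_root {n m} (x : onode n m) : bool := if x is inl _ then true else false.

Section VisitSequence.
Variables n m : nat.
Implicit Type G : OForest n m.

Lemma visit_seq_roots G :
  filter is_tree_root (visit_seq G) = map inl (enum 'I_(n - m).+1).
Proof.
rewrite /visit_seq filter_flatten -map_comp -[RHS]flatten_seq1 -map_comp.
by congr flatten; apply: eq_map => k /=; elim: (psearch _ _ _).
Qed.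

Lemma ochildren_uniq G x : uniq (ochildren G x).
Proof. exact/filter_uniq/enum_uniq. Qed.

Lemma visit_seq_head G : take 1 (visit_seq G) = [:: inl ord0].
Proof. by rewrite /visit_seq enum_ordSl /= take0. Qed.

End VisitSequence.

Section Chain.
Variables (n m : nat) (P : Forest n) (C : nat -> Forest n).
Hypothesis hP : priority_forest P.
Hypothesis hC : max_chain P m C.
Implicit Types (u p : 'I_n.+1).

Lemma chain_step i : i < m -> exists x : 'I_n.+1,
  [/\ C i x = None, C i.+1 x != None, (forall u, u != x -> C i.+1 u = C i u)
    & lam C i.+1 = x].
Proof.
move=> im; have [_ _ PF CV] := hC.
have /andP[sub /cards1P[e de]] := CV i im.
have e_new : e \in edges (C i.+1) :\: edges (C i) by rewrite de set11.
move: (e_new); rewrite !inE => /andP[e_old /eqP Ce].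
have e12 : e.1 < e.2 by apply: (PF i.+1 im).1 Ce.
have grow u p : C i u = Some p -> C i.+1 u = Some p.
  move=> Cu; have : (p, u) \in edges (C i) by rewrite inE Cu.
  by move/(subsetP sub); rewrite inE => /eqP.
have fresh u p : C i.+1 u = Some p -> C i u != Some p -> (p, u) = e.
  by move=> Cu nCu; apply/set1P; rewrite -de !inE /= Cu eqxx andbT.
exists e.2; split.
- case E: (C i e.2) => [p|] //; move: (grow _ _ E); rewrite Ce => -[pe].
  by rewrite pe E eqxx in e_old.
- by rewrite Ce.
- move=> u ne; case E: (C i.+1 u) => [p|].
    have [-> // | nCu] := eqVneq (C i u) (Some p).
    by have /= ue := congr1 snd (fresh _ _ E nCu); rewrite ue eqxx in ne.
  by case E': (C i u) => [p|] //; rewrite (grow _ _ E') in E.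
- rewrite /lam /jh_label /=; case: pickP => [e' | ].
    by rewrite de inE => /eqP ->; apply/maxn_idPr/ltnW.
  by move/(_ e); rewrite e_new.
Qed.

Lemma chain_parent_persists a b u p :
  a <= b <= m -> C a u = Some p -> C b u = Some p.
Proof.
elim: b => [|b IH] /andP[ab bm] Ca; first by move: ab; rewrite leqn0 => /eqP <-.
case: (ltngtP a b.+1) ab => // [ab _ | <- //].
have Cb : C b u = Some p by apply: (IH _ Ca); lia.
have [x [Cx _ Cu _]] := chain_step bm.
by have [ux | /Cu ->] := eqVneq u x; first by rewrite ux Cx in Cb.
Qed.

Lemma chain_parent_stable a b u : a <= b <= m ->
  (forall i, a < i <= b -> lam C i != u) -> C b u = C a u.
Proof.
elim: b => [|b IH] /andP[ab bm] not_lam; first by move: ab; rewrite leqn0 => /eqP <-.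
case: (ltngtP a b.+1) ab => // [ab _ | -> //].
have [x [_ _ Cu lx]] := chain_step bm.
have ux : u != x.
  by apply: contraNneq (not_lam b.+1 _) => [->|]; rewrite ?lx ?eqxx ?ab ?ltnSn.
rewrite (Cu u ux).
by apply: IH => [|i /andP[ai ib]]; [lia | apply: not_lam; lia].
Qed.

Lemma lam_spec i : 0 < i <= m -> exists x : 'I_n.+1,
  [/\ lam C i = x, C i.-1 x = None, C i x != None & P x = C i x].
Proof.
case: i => [//|i] /= im; have [x [Cx Cx' _ lx]] := chain_step im.
exists x; split => //; case E: (C i.+1 x) Cx' => [p|] // _.
by have [_ <- _ _] := hC; apply: chain_parent_persists E; rewrite im leqnn.
Qed.

Lemma lam_inj i j : 0 < i <= m -> 0 < j <= m -> lam C i = lam C j -> i = j.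
Proof.
wlog ij : i j / i < j.
  move=> W hi hj e; case: (ltngtP i j) => [ij | ji | //]; first exact: W.
  by apply/esym/W.
move=> hi hj e; have [x [lx _ Cx _]] := lam_spec hi.
have [y [ly Cy _ _]] := lam_spec hj.
have xy : x = y by apply: ord_inj; rewrite -lx -ly.
case E: (C i x) Cx => [p|] // _.
have : C j.-1 x = Some p by apply: chain_parent_persists E; lia.
by rewrite xy Cy.
Qed.

(* [lamInv C m] shifted down by one: [lam_index v = Some j] names the node [inr j]. *)
Definition lam_index (v : nat) : option 'I_m := [pick i : 'I_m | lam C i.+1 == v].
(* For [v > n], [inord v] is [ord0], a root: hence the [v <= n] side conditions below. *)
Definition is_root (v : nat) : bool := P (inord v) == None.
Definition roots_below (v : nat) : nat := count is_root (iota 0 v).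
Definition lam_vertex (j : 'I_m) : 'I_n.+1 := inord (lam C j.+1).
Definition lam_parent (j : 'I_m) : 'I_n.+1 := odflt ord0 (P (lam_vertex j)).

Lemma lam_index_Some v i : lam_index v = Some i -> lam C i.+1 = v.
Proof. by rewrite /lam_index; case: pickP => // j /eqP e [<-]. Qed.

Lemma lam_le (i : 'I_m) : lam C i.+1 <= n.
Proof. by have [x [-> _ _ _]] := lam_spec (i := i.+1) (ltn_ord i); rewrite -ltnS. Qed.

Lemma lam_vertexE j : lam_vertex j = lam C j.+1 :> nat.
Proof. by rewrite inordK // ltnS lam_le. Qed.

Lemma P_lam_vertex j : P (lam_vertex j) = Some (lam_parent j).
Proof.
have [x [lx _ Cx Px]] := lam_spec (i := j.+1) (ltn_ord j).
have vx : lam_vertex j = x by apply: ord_inj; rewrite lam_vertexE.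
by rewrite /lam_parent vx Px; case: (C _ x) Cx.
Qed.

Lemma lam_parent_lt j : lam_parent j < lam C j.+1.
Proof. by rewrite -lam_vertexE; apply: hP.1; apply: P_lam_vertex. Qed.

Lemma lam_ord_inj (i j : 'I_m) : lam C i.+1 = lam C j.+1 -> i = j.
Proof. by move=> e; apply/val_inj/eq_add_S/(lam_inj _ _ e); rewrite /= ltn_ord. Qed.

Lemma lam_index_lam (i : 'I_m) : lam_index (lam C i.+1) = Some i.
Proof.
rewrite /lam_index; case: pickP => [j /eqP/lam_ord_inj -> // | /(_ i)].
by rewrite eqxx.
Qed.

(* A vertex that is never [lam C i] keeps the parent it has in [C 0], i.e. none. *)
Lemma lam_index_None u : (lam_index u == None) = (P u == None).
Proof.
rewrite /lam_index; case: pickP => [i /eqP li | not_lam].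
  have [x [lx _ Cx Px]] := lam_spec (i := i.+1) (ltn_ord i).
  have -> : u = x by apply: ord_inj; rewrite -li lx.
  by rewrite Px (negbTE Cx).
have [C0 <- _ _] := hC; rewrite (chain_parent_stable (a := 0)) ?C0 ?ffunE ?leqnn //.
by case=> [//|i] /andP[_ im]; have := not_lam (Ordinal im); move/negbT.
Qed.

Lemma lam_index_None_root v : v <= n -> (lam_index v == None) = is_root v.
Proof. by move=> vn; rewrite /is_root -lam_index_None inordK. Qed.

Lemma is_root0 : is_root 0.
Proof.
rewrite /is_root (_ : inord 0 = ord0) ?priority_forest_root0 //.
by apply: val_inj; rewrite /= inordK.
Qed.

(* Otherwise [lam C i.+1] would still be a root of [C j.+1] lying between the root of the
   tree of [lam C j.+1] and [lam C j.+1], against the priority condition on [C j.+1]. *)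
Lemma chain_order (i j : 'I_m) :
  lam_parent j < lam C i.+1 < lam C j.+1 -> i < j.
Proof.
move=> /andP[pj lij]; rewrite ltnNge; apply/negP => ji.
have {}ji : j < i by rewrite ltn_neqAle ji andbT; apply: contraTneq lij => ->; rewrite ltnn.
have [x [lx Cx _ _]] := lam_spec (i := i.+1) (ltn_ord i).
have [y [ly _ _ Py]] := lam_spec (i := j.+1) (ltn_ord j).
have Cy : C j.+1 y = Some (lam_parent j).
  have yv : y = lam_vertex j by apply: ord_inj; rewrite lam_vertexE.
  by rewrite -Py yv P_lam_vertex.
have Cx' : C j.+1 x = None.
  case E: (C j.+1 x) => [p|] //.
  have : C i x = Some p by apply: chain_parent_persists E; rewrite ji ltnW.
  by rewrite Cx.
have [_ _ PF _] := hC.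
have : y < x by apply: (priority_forest_lt_root (PF _ (ltn_ord j)) Cy Cx'); rewrite -lx.
by rewrite -lx -ly; lia.
Qed.

Lemma card_nonroots : #|[set u | P u != None]| = m.
Proof.
have -> : [set u | P u != None] = [set lam_vertex j | j : 'I_m].
  apply/setP => u; rewrite inE; apply/idP/imsetP.
    rewrite -lam_index_None; case E: (lam_index u) => [i|] // _; exists i => //.
    by apply: ord_inj; rewrite lam_vertexE (lam_index_Some E).
  by case=> j _ ->; rewrite P_lam_vertex.
rewrite card_imset ?card_ord // => i j e.
by apply: lam_ord_inj; rewrite -!lam_vertexE e.
Qed.

Lemma count_nonroots : count (predC is_root) (iota 0 n.+1) = m.
Proof.
rewrite -card_ord_set_count -card_nonroots; apply: eq_card => u.
by rewrite !inE /is_root inord_val.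
Qed.

Lemma roots_below_total : roots_below n.+1 = (n - m).+1.
Proof.
have := count_predC is_root (iota 0 n.+1); rewrite count_nonroots size_iota.
have := count_iota_ltn is_root0 (ltn0Sn n); rewrite /roots_below /=; lia.
Qed.

Lemma roots_below_card r : r <= n.+1 ->
  roots_below r = #|[set u | (P u == None) && (u < r)]|.
Proof.
move=> rn; rewrite (eq_card (B := [set u : 'I_n.+1 | is_root u && (u < r)])).
  rewrite (card_ord_set_count (fun v => is_root v && (v < r))).
  rewrite -(subnKC rn) iotaD count_cat add0n.
  rewrite (eq_in_count (a2 := pred0) (s := iota r _)) ?count_pred0 ?addn0.
    by apply: eq_in_count => u; rewrite mem_iota /= => ->; rewrite andbT.
  by move=> u; rewrite mem_iota /= => /andP[ru _]; rewrite ltnNge ru andbF.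
by move=> u; rewrite !inE /is_root inord_val.
Qed.

Lemma roots_below_root_le v : v <= n -> is_root v -> roots_below v <= n - m.
Proof.
move=> vn rv; have := count_iota_ltn rv (ltnSn v).
have := count_iota_mono is_root (vn : v.+1 <= n.+1).
have := roots_below_total; rewrite /roots_below; lia.
Qed.

Local Notation F := (FC m P C).

Definition node_of (v : nat) : onode n m :=
  if lam_index v is Some j then inr j else inl (inord (roots_below v)).

Lemma node_of_lam (i : 'I_m) : node_of (lam C i.+1) = inr i.
Proof. by rewrite /node_of lam_index_lam. Qed.

Lemma node_of_root v : v <= n -> is_root v -> node_of v = inl (inord (roots_below v)).
Proof.
move=> vn rv; rewrite /node_of.
by case E: (lam_index v) (lam_index_None_root vn) => //; rewrite rv.
Qed.

Lemma is_tree_root_node_of v : v <= n -> is_tree_root (node_of v) = is_root v.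
Proof. by move=> vn; rewrite -(lam_index_None_root vn) /node_of; case: (lam_index v). Qed.

Lemma node_of_inj v w : v <= n -> w <= n -> node_of v = node_of w -> v = w.
Proof.
move=> vn wn; rewrite /node_of.
case Ev: (lam_index v) => [i|]; case Ew: (lam_index w) => [j|] // e.
  by move: e => [ij]; rewrite -(lam_index_Some Ev) -(lam_index_Some Ew) ij.
have rv : is_root v by rewrite -(lam_index_None_root vn) Ev.
have rw : is_root w by rewrite -(lam_index_None_root wn) Ew.
apply: (count_iota_inj rv rw); move: e => [/(congr1 (@nat_of_ord _))].
by rewrite !inordK // ltnS roots_below_root_le.
Qed.

Lemma lam_parent_le j : lam_parent j <= n.
Proof. by rewrite -ltnS ltn_ord. Qed.

Lemma FCE j : F j = node_of (lam_parent j).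
Proof.
rewrite ffunE /node_of /lamInv -/(lam_vertex j) -/(lam_parent j) -/(lam_index _).
have := lam_index_None (lam_parent j).
case: (lam_index _) => [i|] /=; case: (P (lam_parent j)) => [p|] //= _.
  by rewrite (valKd j i).
by rewrite roots_below_card // ltnW.
Qed.

(* The frontier of the priority search of the tree rooted at [r] once [r, ..., v-1] are
   visited: the unvisited vertices whose parent has been visited. *)
Definition in_frontier (r v : nat) (j : 'I_m) : bool :=
  (r <= lam_parent j < v) && (v <= lam C j.+1).

Lemma mem_ochildren_lam (i j : 'I_m) :
  (j \in ochildren F (inr i)) = (lam_parent j == lam C i.+1 :> nat).
Proof.
rewrite mem_filter mem_enum andbT FCE /node_of.
case E: (lam_index _) => [k|] //; last first.
  by apply/esym/negbTE/eqP => e; rewrite e lam_index_lam in E.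
apply/eqP/eqP => [[<-] | e]; first by rewrite (lam_index_Some E).
by apply/congr1/lam_ord_inj; rewrite (lam_index_Some E).
Qed.

Lemma mem_ochildren_root r : r <= n -> is_root r -> forall j,
  (j \in ochildren F (inl (inord (roots_below r)))) = in_frontier r r.+1 j.
Proof.
move=> rn rr j; rewrite mem_filter mem_enum andbT FCE /in_frontier.
have [/(node_of_inj (lam_parent_le j) rn) e | ne] :=
  eqVneq (node_of (lam_parent j)) (node_of r).
  by have := lam_parent_lt j; rewrite e node_of_root // eqxx leqnn ltnSn => ->.
rewrite -(node_of_root rn rr) (negbTE ne); apply/esym/negbTE.
apply: contra ne => /andP[/andP[rp pr] _]; apply/eqP; congr node_of; apply/eqP.
by rewrite eqn_leq rp andbT -ltnS.
Qed.

Lemma in_frontier_lam r v (j : 'I_m) : r <= n -> is_root r -> r < v -> lam C j.+1 = v ->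
  in_frontier r v j.
Proof.
move=> rn rr rv lj; rewrite /in_frontier lj leqnn andbT -lj lam_parent_lt andbT.
rewrite leqNgt; apply/negP => pr.
have := priority_forest_lt_root hP (P_lam_vertex j) (eqP rr).
by rewrite inordK // lam_vertexE => /(_ pr); lia.
Qed.

Lemma in_frontier_last r v (j : 'I_m) :
  v <= n.+1 -> (v < n.+1 -> is_root v) -> ~~ in_frontier r v j.
Proof.
move=> vn next_root; apply/negP => /andP[/andP[_ pv] vl]; have := lam_le j.
have [vlt | vge] := ltnP v n.+1; last lia.
have := priority_forest_lt_root hP (P_lam_vertex j) (eqP (next_root vlt)).
rewrite lam_vertexE inordK //; lia.
Qed.

Lemma frontier_min r v (x : 'I_m) s (j0 : 'I_m) :
  r <= n -> is_root r -> r < v -> lam C j0.+1 = v ->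
  (forall j, (j \in x :: s) = in_frontier r v j) -> minlab x s = j0.
Proof.
move=> rn rr rv lj0 front.
have j0_in : j0 \in x :: s by rewrite front in_frontier_lam.
have /andP[/andP[_ py] vy] : in_frontier r v (minlab x s) by rewrite -front minlab_mem.
apply/eqP; apply: contraTT (minlab_min j0_in) => ne; rewrite -ltnNge.
apply: chain_order; rewrite lj0 py /= ltn_neqAle vy andbT.
by apply: contra ne => /eqP e; apply/eqP/lam_ord_inj; rewrite lj0 e.
Qed.

Lemma frontier_step r v fr (j0 : 'I_m) : r < v -> lam C j0.+1 = v -> uniq fr ->
  (forall j, (j \in fr) = in_frontier r v j) ->
  uniq (rem j0 fr ++ ochildren F (inr j0)) /\
  forall j, (j \in rem j0 fr ++ ochildren F (inr j0)) = in_frontier r v.+1 j.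
Proof.
move=> rv lj0 ufr front.
have lamE j : (j != j0) = (lam C j.+1 != v).
  by rewrite -lj0; congr negb; apply/eqP/eqP => [-> // | /lam_ord_inj].
split.
- rewrite cat_uniq rem_uniq // ochildren_uniq andbT /=.
  apply/hasPn => j; rewrite mem_ochildren_lam lj0 => /eqP pj.
  by rewrite (mem_rem_uniq _ ufr) inE /= front /in_frontier pj; lia.
- move=> j; rewrite mem_cat (mem_rem_uniq _ ufr) inE /= front mem_ochildren_lam.
  by rewrite lj0 /in_frontier lamE; have := lam_parent_lt j; lia.
Qed.

Lemma psearch_tree r : r <= n -> is_root r -> forall d v fuel fr,
  r < v -> d <= fuel -> v + d <= n.+1 ->
  (forall u : nat, v <= u < v + d -> ~~ is_root u) ->
  (v + d < n.+1 -> is_root (v + d)) ->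
  uniq fr -> (forall j, (j \in fr) = in_frontier r v j) ->
  map (fun j : 'I_m => lam C j.+1) (psearch F fuel fr) = iota v d.
Proof.
move=> rn rr; elim=> [|d IH] v fuel fr rv dfuel vdn inner next_root ufr front.
  case: fr ufr front => [|j fr] _ front; first by case: fuel {dfuel}.
  rewrite addn0 in vdn next_root.
  by have := in_frontier_last r j vdn next_root; rewrite -front mem_head.
case: fuel dfuel => [//|fuel] dfuel.
have [vn nrv] : v <= n /\ ~~ is_root v by split; [lia | apply: inner; lia].
case E: (lam_index v) (lam_index_None_root vn) => [j0|]; last by rewrite (negbTE nrv).
move=> _; have lj0 := lam_index_Some E.
have j0_in : j0 \in fr by rewrite front in_frontier_lam.
case: fr ufr front j0_in => [//|x s] ufr front _.
have [ufr' front'] := frontier_step rv lj0 ufr front.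
rewrite /= (frontier_min rn rr rv lj0 front) lj0; congr cons.
apply: IH ufr' front'; rewrite ?addSnnS //; try lia.
by move=> u uv; apply: inner; lia.
Qed.

Definition tree_visit (r : nat) : seq (onode n m) :=
  let o := inl (inord (roots_below r)) in o :: map inr (psearch F m (ochildren F o)).

Lemma tree_visitE r d : r <= n -> is_root r -> r.+1 + d <= n.+1 ->
  (forall u : nat, r.+1 <= u < r.+1 + d -> ~~ is_root u) ->
  (r.+1 + d < n.+1 -> is_root (r.+1 + d)) ->
  tree_visit r = map node_of (iota r d.+1).
Proof.
move=> rn rr rdn inner next_root.
have dm : d <= m.
  rewrite -count_nonroots; apply: leq_trans (count_iota_sub _ rdn).
  rewrite (eq_in_count (a2 := predT)) ?count_predT ?size_iota //.
  by move=> u; rewrite mem_iota => /inner.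
rewrite /tree_visit /= node_of_root //; congr cons.
rewrite -(psearch_tree rn rr (ltnSn r) dm rdn inner next_root (ochildren_uniq _ _)
  (mem_ochildren_root rn rr)) -map_comp.
by apply: eq_map => j /=; rewrite node_of_lam.
Qed.

Lemma visit_blocks a : a <= n.+1 -> (a < n.+1 -> is_root a) ->
  flatten [seq tree_visit r | r <- filter is_root (iota a (n.+1 - a))] =
  map node_of (iota a (n.+1 - a)).
Proof.
have [k] := ubnP (n.+1 - a); elim: k a => [//|k IH] a ka an ra.
have [alt | age] := ltnP a n.+1; last by rewrite (_ : n.+1 - a = 0) //; lia.
have [d [dN inner next_root]] := iota_next is_root alt.
rewrite (_ : n.+1 - a = d.+1 + (n.+1 - (a.+1 + d))); last lia.
rewrite !iotaD filter_cat map_cat flatten_cat -addSnnS.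
have -> : filter is_root (iota a d.+1) = [:: a].
  rewrite /= ra // (eq_in_filter (a2 := pred0)) ?filter_pred0 // => u.
  by rewrite mem_iota => /inner /negbTE.
rewrite IH //; try lia.
have -> : flatten [seq tree_visit r | r <- [:: a]] = tree_visit a by rewrite /= cats0.
by rewrite (tree_visitE alt (ra alt) dN inner next_root) map_cat.
Qed.

Lemma enum_tree_roots :
  enum 'I_(n - m).+1 = [seq inord (roots_below r) | r <- filter is_root (iota 0 n.+1)].
Proof.
apply: (inj_map val_inj); rewrite val_enum_ord -map_comp.
transitivity (iota 0 (roots_below n.+1)); first by rewrite roots_below_total.
rewrite -map_count_iota_filter; apply/eq_in_map => r.
rewrite mem_filter mem_iota /= => /andP[rr rn].
by rewrite inordK // ltnS roots_below_root_le.
Qed.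

Lemma visit_seq_FC : visit_seq F = map node_of (iota 0 n.+1).
Proof.
rewrite /visit_seq enum_tree_roots -map_comp.
by have := visit_blocks (leq0n n.+1) (fun _ => is_root0); rewrite subn0.
Qed.

Lemma node_of_surj (x : onode n m) : exists2 w, w <= n & node_of w = x.
Proof.
case: x => [k | i]; last by exists (lam C i.+1); rewrite ?lam_le ?node_of_lam.
have : k \in enum 'I_(n - m).+1 by rewrite mem_enum.
rewrite enum_tree_roots => /mapP[r].
rewrite mem_filter mem_iota ltnS => /andP[rr /andP[_ rn]] ->.
by exists r; rewrite ?node_of_root.
Qed.

Lemma nth_node_of (s : seq (onode n m)) v :
  take n.+1 s = map node_of (iota 0 n.+1) -> v <= n -> nth (inl ord0) s v = node_of v.
Proof.
move=> pre vn; rewrite -(nth_take _ (_ : v < n.+1)) // pre.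
by rewrite (nth_map 0) ?size_iota // nth_iota.
Qed.

Lemma index_node_of (s : seq (onode n m)) w :
  take n.+1 s = map node_of (iota 0 n.+1) -> w <= n -> index (node_of w) s = w.
Proof.
move=> pre wn; have w_in : node_of w \in take n.+1 s by rewrite pre map_f // mem_iota.
rewrite -(cat_take_drop n.+1 s) index_cat w_in pre.
have wlt : w < size (map node_of (iota 0 n.+1)) by rewrite size_map size_iota ltnS.
have uniq_nodes : uniq (map node_of (iota 0 n.+1)).
  rewrite map_inj_in_uniq ?iota_uniq // => v v'; rewrite !mem_iota !ltnS.
  by move=> /andP[_ vn] /andP[_ vn']; apply: node_of_inj.
have := index_uniq (inl ord0) wlt uniq_nodes.
by rewrite (nth_map 0) ?size_iota ?ltnS // nth_iota.
Qed.

Lemma take_visit_seq_FC : take n.+1 (visit_seq F) = map node_of (iota 0 n.+1).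
Proof. by rewrite visit_seq_FC take_oversize // size_map size_iota. Qed.

Lemma traversal_FC i : 0 < i <= n -> traversal F i = lamInv C m i.
Proof.
move=> /andP[_ iN]; rewrite /traversal (nth_node_of take_visit_seq_FC iN).
by rewrite /node_of /lamInv -/(lam_index i); case: (lam_index i).
Qed.

Lemma oprio_FC : oprio F = P.
Proof.
apply/ffunP => v; have vn : v <= n by rewrite -ltnS.
rewrite ffunE (nth_node_of take_visit_seq_FC vn) /node_of.
case E: (lam_index v) => [i|]; last by apply/esym/eqP; rewrite -lam_index_None E.
have -> : v = lam_vertex i by apply: ord_inj; rewrite lam_vertexE (lam_index_Some E).
rewrite FCE P_lam_vertex /step (index_node_of take_visit_seq_FC) ?lam_parent_le //.
by rewrite inord_val.
Qed.

Lemma oup_node_of v : v <= n -> oup F (node_of v) = node_of (up P (inord v)).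
Proof.
move=> vn; case E: (lam_index v) => [i|].
  have -> : node_of v = inr i by rewrite /node_of E.
  have -> : inord v = lam_vertex i.
    by apply: ord_inj; rewrite lam_vertexE inordK ?ltnS // (lam_index_Some E).
  by rewrite /= FCE /up P_lam_vertex.
have rv : is_root v by rewrite -lam_index_None_root // E.
by rewrite /up (eqP rv) /= inordK ?ltnS // node_of_root.
Qed.

Lemma iter_oup_node_of k v : v <= n ->
  iter k (oup F) (node_of v) = node_of (iter k (up P) (inord v)).
Proof.
move=> vn; elim: k => [|k IH] /=; first by rewrite inordK.
by rewrite IH oup_node_of ?inord_val // -ltnS ltn_ord.
Qed.

Lemma ordered_forest_FC : ordered_forest F.
Proof.
move=> j; rewrite -node_of_lam iter_oup_node_of ?lam_le //.
set z := iter m (up P) _.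
have rz : is_root z by rewrite /is_root inord_val (iter_up_root _ hP) ?card_nonroots.
by exists (inord (roots_below z)); rewrite node_of_root // -ltnS ltn_ord.
Qed.

Lemma node_of0 : node_of 0 = inl ord0.
Proof. by rewrite node_of_root ?is_root0 //; congr inl; apply: ord_inj; rewrite inordK. Qed.

Section Uniqueness.
Variable G : OForest n m.
Hypothesis hT : forall i, 0 < i <= n -> traversal G i = lamInv C m i.
Local Notation s := (visit_seq G).

Lemma nth_visit_seq_lam i j : 0 < i <= n -> lam_index i = Some j ->
  i < size s /\ nth (inl ord0) s i = inr j.
Proof.
move=> iN E; have := hT iN; rewrite /traversal /lamInv -/(lam_index i) E /=.
case Es: (nth _ s i) => [// | j'] [/ord_inj ->]; split => //.
by rewrite ltnNge; apply/negP => /(nth_default (inl ord0)); rewrite Es.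
Qed.

(* The roots occur in [s] in increasing order, and [roots_below i] of them precede
   position [i]. *)
Lemma nth_visit_seq_root i : 0 < i <= n -> is_root i ->
  take i s = map node_of (iota 0 i) ->
  i < size s /\ nth (inl ord0) s i = inl (inord (roots_below i)).
Proof.
move=> iN ri pre; have /andP[_ iN'] := iN.
have below_le := roots_below_root_le iN' ri.
have ct : count is_tree_root (take i s) = roots_below i.
  rewrite pre count_map; apply: eq_in_count => u; rewrite mem_iota => /andP[_ ui] /=.
  by rewrite is_tree_root_node_of //; lia.
have ilt : i < size s.
  have := congr1 size (visit_seq_roots G); rewrite size_filter size_map size_enum_ord => cs.
  rewrite ltnNge; apply/negP => /take_oversize tk.
  by move: ct; rewrite tk cs; lia.
have [k Ek] : exists k, nth (inl ord0) s i = inl k.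
  move: (hT iN); rewrite /traversal /lamInv -/(lam_index i).
  have := lam_index_None_root iN'; rewrite ri.
  by case: (lam_index i) => // _; case: (nth _ s i) => [k _|//]; exists k.
split=> //; rewrite Ek.
have := congr1 (nth (inl ord0) ^~ (roots_below i)) (visit_seq_roots G).
rewrite -(cat_take_drop i s) (drop_nth (inl ord0) ilt) Ek filter_cat /=.
rewrite nth_cat size_filter ct ltnn subnn /= (nth_map ord0) ?size_enum_ord //.
by move=> [->]; congr inl; apply: ord_inj; rewrite nth_enum_ord ?inordK.
Qed.

Lemma visit_seq_prefix i : i <= n.+1 -> take i s = map node_of (iota 0 i).
Proof.
elim: i => [|i IH] iN; first by rewrite take0.
have [-> | i0] := posnP i; first by rewrite visit_seq_head /= node_of0.
have pre := IH (ltnW iN); have i_le : i <= n by rewrite -ltnS.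
have iN' : 0 < i <= n by rewrite i0.
have [ilt nth_i] : i < size s /\ nth (inl ord0) s i = node_of i.
  case E: (lam_index i) => [j|]; first by rewrite /node_of E; apply: nth_visit_seq_lam.
  have ri : is_root i by rewrite -lam_index_None_root ?E.
  by rewrite node_of_root //; apply: nth_visit_seq_root.
by rewrite (take_nth (inl ord0) ilt) pre nth_i -map_rcons -cats1 -[i.+1]addn1 iotaD.
Qed.

Lemma FC_unique : oprio G = P -> G = F.
Proof.
move=> hO; have pre := visit_seq_prefix (leqnn n.+1).
apply/ffunP => j; rewrite FCE; have [w wn Gj] := node_of_surj (G j).
have := congr1 (fun Q : Forest n => Q (lam_vertex j)) hO.
rewrite /= ffunE P_lam_vertex lam_vertexE (nth_node_of pre (lam_le j)) node_of_lam.
rewrite /step -Gj (index_node_of pre wn) => -[/(congr1 (@nat_of_ord _))].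
by rewrite inordK // => ->.
Qed.

End Uniqueness.

End Chain.

Theorem lemma3p2 (n m : nat) (P : Forest n) (C : nat -> Forest n) :
  priority_forest P ->
  #|edges P| = m ->
  max_chain P m C ->
  [/\ ordered_forest (FC m P C),
      (forall i, 0 < i <= n -> traversal (FC m P C) i = lamInv C m i),
      oprio (FC m P C) = P &
      (forall G : OForest n m,
         ordered_forest G ->
         (forall i, 0 < i <= n -> traversal G i = lamInv C m i) ->
         oprio G = P -> G = FC m P C)].
Proof.
move=> hP _ hC; split.
- exact: ordered_forest_FC hP hC.
- exact: traversal_FC hP hC.
- exact: oprio_FC hP hC.
- by move=> G _ hT; apply: FC_unique hT.
Qed.
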